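(* Let $k$ be a positive even integer. There exist positive constants $N_0,C_k,A_k$ such that for all $N>N_0$ and all $t=e^z$ on the minor arc $C''_N$ we have \[ |F_k(t)|<C_k\,N^{A_k}. \]
   Context: Let $M_0(t,q)=\prod_{m\geq1}\prod_{j=0}^{m-1}\frac{1}{1-q^{2j+1-m}t^m}$, let $\partial=q\frac{d}{dq}$, and define $M_k(t)=\partial^k M_0(t,q)\big|_{q=1}$. Let $M(t)=\prod_{m\geq1}(1-t^m)^{-m}$ be MacMahon's function, and define $F_k(t)$ by $M_k(t)=F_k(t)\cdot M(t)$ (for $|t|<1$). For $N>0$, $C_N$ is the circle $|t|=e^{-1/N}$; writing $t=e^z$ with $\operatorname{Re}z=-1/N$ and $\operatorname{Im}z\in(-\pi,\pi]$, the major arc $C'_N$ consists of the points with $|\operatorname{Im}z|<1/N$, and the minor arc $C''_N$ is $C_N\setminus C'_N$. *)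

From Stdlib Require Import Reals ZArith ClassicalEpsilon.
From Coquelicot Require Import Coquelicot.
Open Scope R_scope.

Fixpoint prodC (f : nat -> C) (n : nat) : C :=
  match n with
  | O => 1%C
  | S n' => (prodC f n' * f n')%C
  end.

Definition zpowC (q : C) (e : Z) : C :=
  match e with
  | Z0 => 1%C
  | Zpos p => Cpow q (Pos.to_nat p)
  | Zneg p => Cinv (Cpow q (Pos.to_nat p))
  end.

(* the limit of a complex sequence (if it converges; an arbitrary value otherwise) *)
Definition seq_limC (u : nat -> C) : C :=
  epsilon (inhabits (RtoC 0)) (fun l : C => filterlim u eventually (locally l)).

Definition M0_partial (t q : C) (n : nat) : C :=
  prodC (fun i => let m := S i in
           prodC (fun j => Cinv (1 - zpowC q (2 * Z.of_nat j + 1 - Z.of_nat m)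
                                        * Cpow t m)%C) m) n.

Definition M0 (t q : C) : C := seq_limC (M0_partial t q).

Definition qD (f : C -> C) : C -> C := fun q => (q * C_derive f q)%C.

Definition Mk (k : nat) (t : C) : C := Nat.iter k qD (fun q => M0 t q) 1%C.

Definition MacMahon (t : C) : C :=
  seq_limC (prodC (fun i => Cinv (Cpow (1 - Cpow t (S i)) (S i))%C)).

Definition Fk (k : nat) (t : C) : C := (Mk k t / MacMahon t)%C.

Definition cexp_xy (x y : R) : C := (exp x * cos y, exp x * sin y).

(* Write [∂ = q d/dq] and let [P_n(q)] be the partial products of [M_0(t,q)]. On the
   window [sqrt|t| < q < 1/sqrt|t|] of the real axis every factor [1/(1 - q^a t^m)] has
   [|q^a t^m| <= |t|^((m+1)/2)], so [P_n] and all the functions built below converge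
   uniformly there, and derivatives may be taken term-wise. Since [∂ log P_n = H_0] with
   [H_j = ∑ a^(j+1) τ_j], one gets [∂^k P_n = P_n Q_k(H_0, H_1, ...)] for a polynomial
   [Q_k], whence [F_k(t) = lim P_n(1) Q_k(H(1)) / lim P_n(1)] and [|F_k(t)| <= sup_n
   |Q_k(H(1))|]. Finally [|H_j(1)| <= K (1-|t|)^(-b) ∑ m^(j+2) |t|^m], which is
   polynomial in [N] on [|t| = e^(-1/N)]. The bound holds on the whole circle [C_N]. *)

From Stdlib Require Import Reals ZArith Lra Lia ClassicalEpsilon FunctionalExtensionality.
From Coquelicot Require Import Coquelicot.
Open Scope R_scope.

(** * Derivatives of complex-valued functions of a real variable *)

Definition is_deriveC (f : R -> C) (x : R) (d : C) :=
  is_derive (fun y => fst (f y)) x (fst d) /\ is_derive (fun y => snd (f y)) x (snd d).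

Lemma is_derive_eq (f : R -> R) x l l' : is_derive f x l -> l = l' -> is_derive f x l'.
Proof. now intros H <-. Qed.

Lemma is_deriveC_eq f x d d' : is_deriveC f x d -> d = d' -> is_deriveC f x d'.
Proof. now intros H <-. Qed.

Lemma locally_interval lo hi x : lo < x < hi -> locally x (fun y => lo < y < hi).
Proof.
  intros Hx.
  assert (Hp : 0 < Rmin (x - lo) (hi - x)) by (apply Rmin_case; lra).
  exists (mkposreal _ Hp). intros y Hy.
  apply Rabs_lt_between in Hy; simpl in Hy.
  pose proof (Rmin_l (x - lo) (hi - x)); pose proof (Rmin_r (x - lo) (hi - x)).
  unfold minus, plus, opp in Hy; simpl in Hy. lra.
Qed.

Lemma is_deriveC_ext_loc f g x d lo hi : lo < x < hi ->
  (forall y, lo < y < hi -> f y = g y) -> is_deriveC f x d -> is_deriveC g x d.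
Proof.
  intros Hx E [H1 H2].
  split; (eapply is_derive_ext_loc; [|eassumption]);
    eapply filter_imp; try apply (locally_interval lo hi x Hx);
    intros y Hy; simpl; now rewrite E.
Qed.

Lemma is_deriveC_const (c : C) x : is_deriveC (fun _ => c) x 0%C.
Proof. split; apply (is_derive_const (K := R_AbsRing) (V := R_NormedModule)). Qed.

Lemma is_deriveC_RtoC (g : R -> R) x d :
  is_derive g x d -> is_deriveC (fun y => RtoC (g y)) x (RtoC d).
Proof.
  intros H; split; simpl; [exact H|apply (is_derive_const (K := R_AbsRing) (V := R_NormedModule))].
Qed.

Lemma is_deriveC_plus f g x df dg : is_deriveC f x df -> is_deriveC g x dg ->
  is_deriveC (fun y => f y + g y)%C x (df + dg)%C.
Proof.
  intros [H1 H2] [H3 H4]; split; simpl.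
  - exact (is_derive_plus (fun y => fst (f y)) (fun y => fst (g y)) _ _ _ H1 H3).
  - exact (is_derive_plus (fun y => snd (f y)) (fun y => snd (g y)) _ _ _ H2 H4).
Qed.

Lemma is_deriveC_opp f x d : is_deriveC f x d -> is_deriveC (fun y => - f y)%C x (- d)%C.
Proof.
  intros [H1 H2]; split; simpl.
  - exact (is_derive_opp (fun y => fst (f y)) _ _ H1).
  - exact (is_derive_opp (fun y => snd (f y)) _ _ H2).
Qed.

Lemma is_deriveC_mult f g x df dg : is_deriveC f x df -> is_deriveC g x dg ->
  is_deriveC (fun y => f y * g y)%C x (df * g x + f x * dg)%C.
Proof.
  intros [H1 H2] [H3 H4].
  pose proof (is_derive_mult _ _ x _ _ H1 H3 Rmult_comm) as A1.
  pose proof (is_derive_mult _ _ x _ _ H2 H4 Rmult_comm) as A2.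
  pose proof (is_derive_mult _ _ x _ _ H1 H4 Rmult_comm) as A3.
  pose proof (is_derive_mult _ _ x _ _ H2 H3 Rmult_comm) as A4.
  split; eapply is_derive_eq.
  - exact (is_derive_minus _ _ _ _ _ A1 A2).
  - unfold minus, plus, opp, mult; simpl. ring.
  - exact (is_derive_plus _ _ _ _ _ A3 A4).
  - unfold plus, mult; simpl. ring.
Qed.

(* The real and imaginary parts of [1/f] are [Re f / |f|^2] and [- Im f / |f|^2]. *)
Lemma is_deriveC_inv f x df : is_deriveC f x df -> f x <> 0%C ->
  is_deriveC (fun y => / f y)%C x (- df * / f x * / f x)%C.
Proof.
  intros [H1 H2] Hnz.
  set (n2 := fun y => fst (f y) ^ 2 + snd (f y) ^ 2).
  assert (Hn2 : n2 x <> 0).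
  { intro E. apply Hnz.
    destruct (Rplus_sqr_eq_0 (fst (f x)) (snd (f x))) as [E1 E2];
      [unfold n2, Rsqr in *; lra|].
    destruct (f x); simpl in *; now subst. }
  assert (Dn2 : is_derive n2 x (2 * fst (f x) * fst df + 2 * snd (f x) * snd df)).
  { eapply is_derive_eq.
    - exact (is_derive_plus _ _ _ _ _ (is_derive_pow _ 2 x _ H1) (is_derive_pow _ 2 x _ H2)).
    - unfold plus; simpl. ring. }
  pose proof (is_derive_div _ _ _ _ _ H1 Dn2 Hn2) as D1.
  pose proof (is_derive_div _ _ _ _ _ (is_derive_opp _ _ _ H2) Dn2 Hn2) as D2.
  unfold n2 in *; destruct (f x) as [a b], df as [d1 d2]; simpl in *.
  split; simpl; (eapply is_derive_eq; [eassumption|]);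
    unfold plus, opp; simpl; field; lra.
Qed.

Fixpoint sumR (f : nat -> R) (n : nat) : R :=
  match n with O => 0 | S n' => sumR f n' + f n' end.

Fixpoint sumC (f : nat -> C) (n : nat) : C :=
  match n with O => 0%C | S n' => (sumC f n' + f n')%C end.

Lemma sumR_le f g n : (forall i, (i < n)%nat -> f i <= g i) -> sumR f n <= sumR g n.
Proof.
  induction n as [|n IH]; simpl; intros H; [lra|].
  assert (sumR f n <= sumR g n) by (apply IH; intros; apply H; lia).
  specialize (H n ltac:(lia)). lra.
Qed.

Lemma sumR_nonneg f n : (forall i, (i < n)%nat -> 0 <= f i) -> 0 <= sumR f n.
Proof.
  induction n as [|n IH]; simpl; intros H; [lra|].
  assert (0 <= sumR f n) by (apply IH; intros; apply H; lia).
  specialize (H n ltac:(lia)). lra.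
Qed.

Lemma sumR_ext f g n : (forall i, (i < n)%nat -> f i = g i) -> sumR f n = sumR g n.
Proof.
  induction n as [|n IH]; simpl; intros H; [reflexivity|].
  rewrite IH, H; [reflexivity|lia|intros; apply H; lia].
Qed.

Lemma sumR_scal c f n : sumR (fun i => c * f i) n = c * sumR f n.
Proof. induction n as [|n IH]; simpl; [ring|rewrite IH; ring]. Qed.

Lemma sumR_const c n : sumR (fun _ => c) n = INR n * c.
Proof. induction n as [|n IH]; simpl sumR; [simpl; ring|rewrite IH, S_INR; ring]. Qed.

Lemma sumR_shift_le f n d : (forall i, 0 <= f i) ->
  sumR (fun i => f (n + i)%nat) d <= sumR f (n + d).
Proof.
  intros Hf. induction d as [|d IH]; simpl.
  - replace (n + 0)%nat with n by lia.
    apply sumR_nonneg. intros; apply Hf.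
  - rewrite Nat.add_succ_r. simpl. lra.
Qed.

Lemma Cmod_sumC f n : Cmod (sumC f n) <= sumR (fun i => Cmod (f i)) n.
Proof.
  induction n as [|n IH]; simpl; [rewrite Cmod_0; lra|].
  eapply Rle_trans; [apply Cmod_triangle|lra].
Qed.

Lemma sumC_ext (f g : nat -> C) n : (forall i, (i < n)%nat -> f i = g i) -> sumC f n = sumC g n.
Proof. induction n; simpl; intros H; auto. rewrite IHn, H by (auto; lia). reflexivity. Qed.

Lemma sumC_div (f : nat -> C) c n : sumC (fun i => f i / c)%C n = (sumC f n / c)%C.
Proof. induction n as [|n IH]; simpl; [unfold Cdiv; ring|]. rewrite IH. unfold Cdiv. ring. Qed.

Lemma sumC_add_sub f n d : (sumC f (n + d) - sumC f n)%C = sumC (fun i => f (n + i)%nat) d.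
Proof.
  induction d as [|d IH]; simpl.
  - rewrite Nat.add_0_r. ring.
  - rewrite Nat.add_succ_r. simpl. rewrite <- IH. ring.
Qed.

Lemma is_deriveC_sum (g : nat -> R -> C) (d : nat -> C) x n :
  (forall i, (i < n)%nat -> is_deriveC (g i) x (d i)) ->
  is_deriveC (fun y => sumC (fun i => g i y) n) x (sumC d n).
Proof.
  induction n as [|n IH]; intros H; simpl.
  - apply is_deriveC_const.
  - apply is_deriveC_plus; [apply IH; intros; apply H|apply H]; lia.
Qed.

Lemma is_deriveC_prod (g : nat -> R -> C) (e : nat -> C) x n :
  (forall i, (i < n)%nat -> is_deriveC (g i) x (g i x * e i)%C) ->
  is_deriveC (fun y => prodC (fun i => g i y) n) x (prodC (fun i => g i x) n * sumC e n)%C.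
Proof.
  induction n as [|n IH]; intros H; simpl; eapply is_deriveC_eq.
  - apply is_deriveC_const.
  - ring.
  - apply (is_deriveC_mult (fun y => prodC (fun i => g i y) n) (g n));
      [apply IH; intros; apply H|apply H]; lia.
  - ring.
Qed.

Lemma prodC_ext (f g : nat -> C) n : (forall i, (i < n)%nat -> f i = g i) -> prodC f n = prodC g n.
Proof.
  induction n as [|n IH]; simpl; intros H; [reflexivity|].
  rewrite IH, H; [reflexivity|lia|intros; apply H; lia].
Qed.

Lemma prodC_inv_const (z : C) m : z <> 0%C -> prodC (fun _ => Cinv z) m = Cinv (Cpow z m).
Proof.
  intros Hz. induction m as [|m IH]; simpl; [field|].
  rewrite IH. field. split; [now apply Cpow_nz|exact Hz].
Qed.

Lemma Cmod_1_sub_ge (w : C) : 1 - Cmod w <= Cmod (1 - w)%C.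
Proof.
  pose proof (Cmod_triangle (1 - w)%C w) as H.
  replace (1 - w + w)%C with (RtoC 1) in H by ring. rewrite Cmod_1 in H. lra.
Qed.

Lemma Cmod_inv_1_sub_le (w : C) : Cmod w < 1 -> Cmod (Cinv (1 - w))%C <= / (1 - Cmod w).
Proof.
  intros Hw. pose proof (Cmod_1_sub_ge w) as H.
  rewrite Cmod_inv; [apply Rinv_le_contravar; lra|].
  intro E. rewrite E, Cmod_0 in H. lra.
Qed.

Lemma Cmod_inv_1_sub_sub_1_le (w : C) : Cmod w < 1 ->
  Cmod (Cinv (1 - w) - 1)%C <= Cmod w / (1 - Cmod w).
Proof.
  intros Hw. pose proof (Cmod_1_sub_ge w) as H.
  assert (Hnz : (1 - w)%C <> 0%C) by (intro E; rewrite E, Cmod_0 in H; lra).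
  replace (Cinv (1 - w) - 1)%C with (w * Cinv (1 - w))%C by (field; auto).
  rewrite Cmod_mult. apply Rmult_le_compat_l; [apply Cmod_ge_0|now apply Cmod_inv_1_sub_le].
Qed.

Lemma exp_le_compat x y : x <= y -> exp x <= exp y.
Proof. intros [H|<-]; [now apply Rlt_le, exp_increasing|lra]. Qed.

Lemma pow_1_plus_le_exp e m : 0 <= e -> (1 + e) ^ m <= exp (INR m * e).
Proof.
  intros He. induction m as [|m IH]; [simpl; rewrite Rmult_0_l, exp_0; lra|].
  rewrite S_INR, Rmult_plus_distr_r, Rmult_1_l, exp_plus. simpl pow.
  pose proof (exp_ineq1_le e). rewrite Rmult_comm.
  apply Rmult_le_compat; [apply pow_le; lra|lra|assumption|lra].
Qed.

Lemma pow_1_plus_sub_1_le e m : 0 <= e -> (1 + e) ^ m - 1 <= INR m * e * (1 + e) ^ m.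
Proof.
  intros He. induction m as [|m IH]; [simpl; lra|].
  rewrite S_INR. simpl pow.
  assert (1 <= (1 + e) ^ m) by (apply pow_R1_Rle; lra).
  nra.
Qed.

Lemma prodC_near_1 (f : nat -> C) m e : 0 <= e ->
  (forall k, (k < m)%nat -> Cmod (f k - 1)%C <= e) ->
  Cmod (prodC f m - 1)%C <= (1 + e) ^ m - 1 /\ Cmod (prodC f m) <= (1 + e) ^ m.
Proof.
  intros He. induction m as [|m IH]; intros H.
  - simpl. replace (1 - 1)%C with (RtoC 0) by ring. rewrite Cmod_0, Cmod_1. lra.
  - destruct IH as [A B]; [intros; apply H; lia|].
    specialize (H m ltac:(lia)).
    assert (Hf : Cmod (f m) <= 1 + e).
    { replace (f m) with ((f m - 1) + 1)%C by ring.
      eapply Rle_trans; [apply Cmod_triangle|rewrite Cmod_1; lra]. }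
    assert (0 <= (1 + e) ^ m) by (apply pow_le; lra).
    simpl prodC. simpl pow. split.
    + replace (prodC f m * f m - 1)%C with ((prodC f m - 1) * f m + (f m - 1))%C by ring.
      eapply Rle_trans; [apply Cmod_triangle|]. rewrite Cmod_mult.
      assert (Cmod (prodC f m - 1)%C * Cmod (f m) <= ((1 + e) ^ m - 1) * (1 + e))
        by (apply Rmult_le_compat; auto; apply Cmod_ge_0).
      nra.
    + rewrite Cmod_mult, Rmult_comm. apply Rmult_le_compat; auto; apply Cmod_ge_0.
Qed.

(** * Differentiating uniform limits *)

Lemma is_lim_diff_quotient f x l :
  is_derive f x l -> is_lim (fun y => (f y - f x) / (y - x)) x l.
Proof.
  intros H. apply is_derive_Reals in H. apply is_lim_spec. intros eps.
  destruct (H eps (cond_pos eps)) as [delta Hd].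
  exists delta. intros y Hy Hyx; simpl in y.
  specialize (Hd (y - x)). replace (x + (y - x)) with y in Hd by ring.
  apply Hd; [lra|exact Hy].
Qed.

(* Coquelicot's [C_derive] only takes the limit along the real direction, so at a
   real point it is the derivative of the restriction to the real line. *)
Lemma C_derive_real (F : C -> C) (U : R -> C) lo hi x d :
  lo < x < hi -> (forall y, lo < y < hi -> F (y, 0) = U y) -> is_deriveC U x d ->
  C_derive F (x, 0) = d.
Proof.
  intros Hx E [H1 H2].
  assert (Hloc : Rbar_locally' x (fun y => lo < y < hi /\ y <> x)).
  { destruct (locally_interval lo hi x Hx) as [delta Hd].
    exists delta. intros y Hy Hyx. split; [apply Hd, Hy|exact Hyx]. }
  unfold C_derive, C_lim; cbn [fst snd]; destruct d as [d1 d2]; simpl in H1, H2.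
  f_equal; [rewrite (is_lim_unique _ _ d1)|rewrite (is_lim_unique _ _ d2)]; try reflexivity.
  - eapply is_lim_ext_loc; [|exact (is_lim_diff_quotient _ _ _ H1)].
    eapply filter_imp; [|exact Hloc]. intros y [Hy Hyx].
    rewrite (E y Hy), (E x Hx). destruct (U y), (U x).
    unfold Cdiv, Cminus, Cinv, Cmult, Cplus, Copp; simpl. field. lra.
  - eapply is_lim_ext_loc; [|exact (is_lim_diff_quotient _ _ _ H2)].
    eapply filter_imp; [|exact Hloc]. intros y [Hy Hyx].
    rewrite (E y Hy), (E x Hx). destruct (U y), (U x).
    unfold Cdiv, Cminus, Cinv, Cmult, Cplus, Copp; simpl. field. lra.
Qed.

Lemma CVU_cauchy_ext fn gn (D : R -> Prop) : (forall n x, D x -> fn n x = gn n x) ->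
  CVU_cauchy fn D -> CVU_cauchy gn D.
Proof.
  intros E H eps. destruct (H eps) as [N HN]. exists N. intros n m x Dx Hn Hm.
  rewrite <- !E by assumption. auto.
Qed.

Lemma CVU_cauchy_div_id fn (D : R -> Prop) lo : 0 < lo -> (forall x, D x -> lo <= x) ->
  CVU_cauchy fn D -> CVU_cauchy (fun n x => fn n x / x) D.
Proof.
  intros Hlo Hx H eps.
  assert (Hp : 0 < eps * lo) by (apply Rmult_lt_0_compat; [apply cond_pos|lra]).
  destruct (H (mkposreal _ Hp)) as [N HN]. exists N. intros n m x Dx Hn Hm.
  specialize (HN n m x Dx Hn Hm). simpl in HN. specialize (Hx x Dx).
  replace (fn n x / x - fn m x / x) with ((fn n x - fn m x) / x) by (field; lra).
  unfold Rdiv. rewrite Rabs_mult, Rabs_inv, (Rabs_pos_eq x) by lra.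
  apply (Rmult_lt_reg_r x); [lra|]. rewrite Rmult_assoc, Rinv_l by lra.
  pose proof (cond_pos eps). nra.
Qed.

Lemma CVU_cauchy_is_lim_seq (fn : nat -> R -> R) (D : R -> Prop) x :
  CVU_cauchy fn D -> D x -> is_lim_seq (fun n => fn n x) (real (Lim_seq (fun n => fn n x))).
Proof.
  intros H Dx.
  destruct (CVU_CVS_dom _ _ (proj2 (CVU_dom_cauchy fn D) H) x Dx) as [l Hl].
  now rewrite (is_lim_seq_unique _ _ Hl).
Qed.

(* Term-wise differentiation of a uniformly convergent sequence, for the operator [x d/dx]. *)
Lemma is_derive_Lim_seq_div (u v : nat -> R -> R) lo hi x :
  0 < lo -> lo < x < hi ->
  (forall n y, lo < y < hi -> is_derive (u n) y (v n y / y)) ->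
  (forall n y, lo < y < hi -> ex_derive (v n) y) ->
  CVU_cauchy u (fun y => lo < y < hi) -> CVU_cauchy v (fun y => lo < y < hi) ->
  is_derive (fun y => real (Lim_seq (fun n => u n y))) x (real (Lim_seq (fun n => v n x)) / x).
Proof.
  intros Hlo Hx Hu Hv Cu Cv.
  set (D := fun y => lo < y < hi).
  assert (Dr : forall n y, D y -> Derive (u n) y = v n y / y)
    by (intros n y Hy; now apply is_derive_unique, Hu).
  assert (Hcont : forall n y, D y -> continuity_pt (Derive (u n)) y).
  { intros n y Hy.
    apply continuity_pt_ext_loc with (f := fun y => v n y / y).
    - eapply filter_imp; [|apply (locally_interval lo hi y Hy)].
      intros z Hz. now rewrite Dr.
    - apply continuity_pt_div.
      + apply continuity_pt_filterlim.
        apply (ex_derive_continuous (K := R_AbsRing) (V := R_NormedModule)), Hv, Hy.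
      + apply continuity_pt_id.
      + unfold D in Hy; lra. }
  assert (CVD : CVU_dom (fun n y => Derive (u n) y) D).
  { apply CVU_dom_cauchy. eapply CVU_cauchy_ext; [|apply (CVU_cauchy_div_id v D lo Hlo)].
    - intros n y Hy. simpl. now rewrite Dr.
    - unfold D; intros; lra.
    - exact Cv. }
  pose proof (CVU_Derive u D) as CD.
  eapply is_derive_eq.
  - apply CD; try assumption.
    + apply open_and; [apply open_gt|apply open_lt].
    + intros a b z Ha Hb Hz; unfold D in *; lra.
    + now apply CVU_dom_cauchy.
    + intros n y Hy. eexists. now apply Hu.
  - rewrite (Lim_seq_ext _ (fun n => v n x / x)) by (intros n; now apply Dr).
    unfold Rdiv at 1.
    rewrite (is_lim_seq_unique _ _ (is_lim_seq_scal_r _ (/ x) _ (CVU_cauchy_is_lim_seq _ D x Cv Hx))).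
    simpl. field. lra.
Qed.

Definition lim_seqC (u : nat -> C) : C :=
  (real (Lim_seq (fun n => fst (u n))), real (Lim_seq (fun n => snd (u n)))).

Definition CVU_cauchyC (s : nat -> R -> C) (D : R -> Prop) :=
  CVU_cauchy (fun n x => fst (s n x)) D /\ CVU_cauchy (fun n x => snd (s n x)) D.

Lemma is_deriveC_lim_seq (u v : nat -> R -> C) lo hi x :
  0 < lo -> lo < x < hi ->
  (forall n y, lo < y < hi -> is_deriveC (u n) y (v n y / RtoC y)%C) ->
  (forall n y, lo < y < hi -> exists d, is_deriveC (v n) y d) ->
  CVU_cauchyC u (fun y => lo < y < hi) -> CVU_cauchyC v (fun y => lo < y < hi) ->
  is_deriveC (fun y => lim_seqC (fun n => u n y)) x (lim_seqC (fun n => v n x) / RtoC x)%C.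
Proof.
  intros Hlo Hx Hu Hv [U1 U2] [V1 V2].
  assert (Hdiv : forall z y, y <> 0 -> (z / RtoC y)%C = (fst z / y, snd z / y)).
  { intros [a b] y Hy. unfold Cdiv, Cinv, Cmult, RtoC; simpl. f_equal; field; auto. }
  rewrite Hdiv by lra. split; simpl.
  - apply (is_derive_Lim_seq_div (fun n y => fst (u n y)) (fun n y => fst (v n y)) lo hi);
      try assumption; intros n y Hy.
    + destruct (Hu n y Hy) as [Hd _]. now rewrite Hdiv in Hd by lra.
    + destruct (Hv n y Hy) as [d [Hd _]]. eexists; exact Hd.
  - apply (is_derive_Lim_seq_div (fun n y => snd (u n y)) (fun n y => snd (v n y)) lo hi);
      try assumption; intros n y Hy.
    + destruct (Hu n y Hy) as [_ Hd]. now rewrite Hdiv in Hd by lra.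
    + destruct (Hv n y Hy) as [d [_ Hd]]. eexists; exact Hd.
Qed.

Lemma iter_qD_lim_seq (f : C -> C) (u : nat -> nat -> R -> C) lo hi :
  0 < lo ->
  (forall i n x, lo < x < hi -> is_deriveC (u i n) x (u (S i) n x / RtoC x)%C) ->
  (forall i, CVU_cauchyC (u i) (fun x => lo < x < hi)) ->
  (forall x, lo < x < hi -> f (RtoC x) = lim_seqC (fun n => u 0%nat n x)) ->
  forall i x, lo < x < hi -> Nat.iter i qD f (RtoC x) = lim_seqC (fun n => u i n x).
Proof.
  intros Hlo Hd Hu H0 i. induction i as [|i IH]; intros x Hx; [now apply H0|].
  change (Nat.iter (S i) qD f) with (qD (Nat.iter i qD f)). unfold qD at 1.
  change (RtoC x) with ((x, 0) : C) at 2.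
  rewrite (C_derive_real _ (fun y => lim_seqC (fun n => u i n y)) lo hi x
             (lim_seqC (fun n => u (S i) n x) / RtoC x)%C Hx IH).
  - destruct (lim_seqC _) as [a b]. unfold Cdiv, Cinv, Cmult, RtoC; simpl.
    f_equal; field; lra.
  - apply (is_deriveC_lim_seq _ _ lo hi); auto.
    intros n y Hy. eexists. now apply Hd.
Qed.

(** * Polynomial expressions and derivations *)

Inductive expr (A : Type) : Type :=
| EAtom : A -> expr A
| EOne : expr A
| EZero : expr A
| EAdd : expr A -> expr A -> expr A
| EMul : expr A -> expr A -> expr A.
Arguments EAtom {A}. Arguments EOne {A}. Arguments EZero {A}.
Arguments EAdd {A}. Arguments EMul {A}.

Fixpoint eval_expr {A} (val : A -> C) (e : expr A) : C :=
  match e with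
  | EAtom a => val a
  | EOne => 1%C
  | EZero => 0%C
  | EAdd e1 e2 => (eval_expr val e1 + eval_expr val e2)%C
  | EMul e1 e2 => (eval_expr val e1 * eval_expr val e2)%C
  end.

Fixpoint deriv_expr {A} (d : A -> expr A) (e : expr A) : expr A :=
  match e with
  | EAtom a => d a
  | EOne | EZero => EZero
  | EAdd e1 e2 => EAdd (deriv_expr d e1) (deriv_expr d e2)
  | EMul e1 e2 => EAdd (EMul (deriv_expr d e1) e2) (EMul e1 (deriv_expr d e2))
  end.

Lemma is_deriveC_eval_expr {A} (d : A -> expr A) (F : A -> R -> C) (lam : C) x :
  (forall a, is_deriveC (F a) x (lam * eval_expr (fun b => F b x) (d a))%C) ->
  forall e, is_deriveC (fun y => eval_expr (fun b => F b y) e) x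
                       (lam * eval_expr (fun b => F b x) (deriv_expr d e))%C.
Proof.
  intros Ha e. induction e as [a| | |e1 IH1 e2 IH2|e1 IH1 e2 IH2]; simpl.
  - apply Ha.
  - eapply is_deriveC_eq; [apply is_deriveC_const|ring].
  - eapply is_deriveC_eq; [apply is_deriveC_const|ring].
  - eapply is_deriveC_eq; [apply (is_deriveC_plus _ _ _ _ _ IH1 IH2)|ring].
  - eapply is_deriveC_eq; [apply (is_deriveC_mult _ _ _ _ _ IH1 IH2)|ring].
Qed.

(* Expressions in two atoms [w] ([true]) and [v] ([false]) with [v = 1/(1-w)]:
   the derivation [w' = w], [v' = w v^2] is [∂] up to the factor [a], and
   [w_divisible e] records that every monomial of [e] contains [w]. *)
Definition deriv_wv (a : bool) : expr bool :=
  if a then EAtom true else EMul (EAtom true) (EMul (EAtom false) (EAtom false)).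

Fixpoint w_divisible (e : expr bool) : bool :=
  match e with
  | EAtom a => a
  | EOne => false
  | EZero => true
  | EAdd e1 e2 => w_divisible e1 && w_divisible e2
  | EMul e1 e2 => w_divisible e1 || w_divisible e2
  end.

Lemma w_divisible_deriv e : w_divisible e = true -> w_divisible (deriv_expr deriv_wv e) = true.
Proof.
  induction e as [[]| | |e1 IH1 e2 IH2|e1 IH1 e2 IH2]; simpl; intros H; auto.
  - apply andb_prop in H as [H1 H2]. now rewrite IH1, IH2.
  - apply Bool.orb_prop in H as [H|H].
    + now rewrite IH1, H.
    + rewrite IH2, H by assumption. now rewrite !Bool.orb_true_r.
Qed.

Definition wv_val (w v : C) (a : bool) : C := if a then w else v.

Definition w_weight (b : bool) (c : R) : R := if b then c else 1.

Lemma weaken_bound K c c' q b b' : 0 <= K -> 0 <= c <= c' -> 1 <= q -> (b <= b')%nat ->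
  K * c * q ^ b <= K * c' * q ^ b'.
Proof.
  intros HK Hc Hq Hb.
  apply Rmult_le_compat; [nra|apply pow_le; lra|apply Rmult_le_compat_l; lra|].
  now apply Rle_pow.
Qed.

Lemma eval_wv_bound e : exists K b, 0 <= K /\
  forall w v : C, Cmod w < 1 -> Cmod v <= / (1 - Cmod w) ->
    Cmod (eval_expr (wv_val w v) e) <=
      K * w_weight (w_divisible e) (Cmod w) * (/ (1 - Cmod w)) ^ b.
Proof.
  induction e as [a| | |e1 IH1 e2 IH2|e1 IH1 e2 IH2].
  - exists 1, (if a then 0%nat else 1%nat). split; [lra|]. intros w v Hw Hv.
    destruct a; simpl; lra.
  - exists 1, 0%nat. split; [lra|]. intros; simpl. rewrite Cmod_1. lra.
  - exists 0, 0%nat. split; [lra|]. intros; simpl. rewrite Cmod_0. lra.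
  - destruct IH1 as [K1 [b1 [HK1 H1]]], IH2 as [K2 [b2 [HK2 H2]]].
    exists (K1 + K2), (b1 + b2)%nat. split; [lra|]. intros w v Hw Hv.
    specialize (H1 w v Hw Hv). specialize (H2 w v Hw Hv). simpl.
    pose proof (Cmod_ge_0 w).
    assert (Hq : 1 <= / (1 - Cmod w)) by (rewrite <- Rinv_1; apply Rinv_le_contravar; lra).
    assert (W1 : K1 * w_weight (w_divisible e1) (Cmod w) * (/ (1 - Cmod w)) ^ b1 <=
                 K1 * w_weight (w_divisible e1 && w_divisible e2) (Cmod w) * (/ (1 - Cmod w)) ^ (b1 + b2))
      by (apply weaken_bound; [|destruct (w_divisible e1), (w_divisible e2); simpl| |]; lra || lia).
    assert (W2 : K2 * w_weight (w_divisible e2) (Cmod w) * (/ (1 - Cmod w)) ^ b2 <=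
                 K2 * w_weight (w_divisible e1 && w_divisible e2) (Cmod w) * (/ (1 - Cmod w)) ^ (b1 + b2))
      by (apply weaken_bound; [|destruct (w_divisible e1), (w_divisible e2); simpl| |]; lra || lia).
    eapply Rle_trans; [apply Cmod_triangle|]. nra.
  - destruct IH1 as [K1 [b1 [HK1 H1]]], IH2 as [K2 [b2 [HK2 H2]]].
    exists (K1 * K2), (b1 + b2)%nat. split; [nra|]. intros w v Hw Hv.
    specialize (H1 w v Hw Hv). specialize (H2 w v Hw Hv). simpl.
    pose proof (Cmod_ge_0 w).
    assert (Hq : 0 <= / (1 - Cmod w)) by (apply Rlt_le, Rinv_0_lt_compat; lra).
    assert (Hc : w_weight (w_divisible e1) (Cmod w) * w_weight (w_divisible e2) (Cmod w) <=
                 w_weight (w_divisible e1 || w_divisible e2) (Cmod w))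
      by (destruct (w_divisible e1), (w_divisible e2); simpl; nra).
    assert (0 <= w_weight (w_divisible e1) (Cmod w)) by (destruct (w_divisible e1); simpl; lra).
    assert (0 <= w_weight (w_divisible e2) (Cmod w)) by (destruct (w_divisible e2); simpl; lra).
    assert (0 <= (/ (1 - Cmod w)) ^ b1 * (/ (1 - Cmod w)) ^ b2)
      by (apply Rmult_le_pos; apply pow_le; lra).
    rewrite Cmod_mult, pow_add.
    eapply Rle_trans; [apply Rmult_le_compat; [apply Cmod_ge_0|apply Cmod_ge_0|exact H1|exact H2]|].
    replace (K1 * w_weight (w_divisible e1) (Cmod w) * (/ (1 - Cmod w)) ^ b1 *
             (K2 * w_weight (w_divisible e2) (Cmod w) * (/ (1 - Cmod w)) ^ b2))
      with (K1 * K2 * ((/ (1 - Cmod w)) ^ b1 * (/ (1 - Cmod w)) ^ b2) *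
            (w_weight (w_divisible e1) (Cmod w) * w_weight (w_divisible e2) (Cmod w))) by ring.
    replace (K1 * K2 * w_weight (w_divisible e1 || w_divisible e2) (Cmod w) *
             ((/ (1 - Cmod w)) ^ b1 * (/ (1 - Cmod w)) ^ b2))
      with (K1 * K2 * ((/ (1 - Cmod w)) ^ b1 * (/ (1 - Cmod w)) ^ b2) *
            w_weight (w_divisible e1 || w_divisible e2) (Cmod w)) by ring.
    apply Rmult_le_compat_l; [apply Rmult_le_pos; [apply Rmult_le_pos|]; assumption|exact Hc].
Qed.

Lemma eval_expr_poly_growth {T A : Type} (P : T -> Prop) (val : T -> A -> C) (Nf : T -> R) :
  (forall th, P th -> 1 <= Nf th) ->
  (forall a, exists c p, 0 <= c /\ forall th, P th -> Cmod (val th a) <= c * Nf th ^ p) ->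
  forall e, exists c p, 0 <= c /\ forall th, P th -> Cmod (eval_expr (val th) e) <= c * Nf th ^ p.
Proof.
  intros HN Ha e. induction e as [a| | |e1 IH1 e2 IH2|e1 IH1 e2 IH2]; simpl.
  - apply Ha.
  - exists 1, 0%nat. split; [lra|]. intros; rewrite Cmod_1; simpl; lra.
  - exists 0, 0%nat. split; [lra|]. intros; rewrite Cmod_0; simpl; lra.
  - destruct IH1 as [c1 [p1 [Hc1 H1]]], IH2 as [c2 [p2 [Hc2 H2]]].
    exists (c1 + c2), (p1 + p2)%nat. split; [lra|]. intros th Hth.
    specialize (H1 th Hth). specialize (H2 th Hth). specialize (HN th Hth).
    assert (Nf th ^ p1 <= Nf th ^ (p1 + p2)) by (apply Rle_pow; lia || lra).
    assert (Nf th ^ p2 <= Nf th ^ (p1 + p2)) by (apply Rle_pow; lia || lra).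
    eapply Rle_trans; [apply Cmod_triangle|nra].
  - destruct IH1 as [c1 [p1 [Hc1 H1]]], IH2 as [c2 [p2 [Hc2 H2]]].
    exists (c1 * c2), (p1 + p2)%nat. split; [nra|]. intros th Hth.
    rewrite Cmod_mult, pow_add.
    replace (c1 * c2 * (Nf th ^ p1 * Nf th ^ p2)) with ((c1 * Nf th ^ p1) * (c2 * Nf th ^ p2)) by ring.
    apply Rmult_le_compat; auto; apply Cmod_ge_0.
Qed.

(** * Uniformly Cauchy sequences of partial sums *)

Lemma pow_le_pow_le_1 (x : R) m n : 0 <= x <= 1 -> (m <= n)%nat -> x ^ n <= x ^ m.
Proof.
  intros Hx Hmn. replace n with (m + (n - m))%nat by lia. rewrite pow_add.
  assert (0 <= x ^ m) by (apply pow_le; lra).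
  assert (x ^ (n - m) <= 1) by (rewrite <- (pow1 (n - m)); apply pow_incr; lra).
  nra.
Qed.

Lemma pow_sub_pow_le a b p : 0 <= b <= a -> a ^ S p - b ^ S p <= INR (S p) * (a - b) * a ^ p.
Proof.
  intros Hab. induction p as [|p IH]; [simpl; lra|].
  assert (b ^ S p <= a ^ S p) by (apply pow_incr; lra).
  rewrite S_INR. simpl pow in *. nra.
Qed.

Definition poly_geom_sum (p : nat) (g : R) (n : nat) : R :=
  sumR (fun i => INR (S i) ^ p * g ^ (S i)) n.

Lemma poly_geom_sum_nonneg p g n : 0 <= g -> 0 <= poly_geom_sum p g n.
Proof.
  intros Hg. apply sumR_nonneg. intros.
  apply Rmult_le_pos; apply pow_le; [apply pos_INR|lra].
Qed.

(* Multiplying by [1 - g] telescopes against [(i+1)^(p+1) - i^(p+1) <= (p+1) (i+1)^p]. *)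
Lemma poly_geom_sum_succ_le p g n : 0 <= g < 1 ->
  (1 - g) * poly_geom_sum (S p) g n + INR n ^ S p * g ^ S n <= INR (S p) * poly_geom_sum p g n.
Proof.
  intros Hg. induction n as [|n IH]; [unfold poly_geom_sum; simpl; lra|].
  unfold poly_geom_sum in *. cbn [sumR].
  pose proof (pow_sub_pow_le (INR (S n)) (INR n) p) as Hpd.
  rewrite (S_INR n) in *. pose proof (pos_INR n).
  specialize (Hpd ltac:(lra)). replace (INR n + 1 - INR n) with 1 in Hpd by ring.
  assert (Hgn : 0 <= g ^ S n) by (apply pow_le; lra).
  change (g ^ S (S n)) with (g * g ^ S n).
  set (gn := g ^ S n) in *.
  set (X := (INR n + 1) ^ S p) in *. set (Y := (INR n + 1) ^ p) in *. set (Z := INR n ^ S p) in *.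
  assert (K : (X - Z) * gn <= INR (S p) * 1 * Y * gn) by (apply Rmult_le_compat_r; lra).
  nra.
Qed.

Lemma poly_geom_sum_le p g n : 0 <= g < 1 -> poly_geom_sum p g n <= INR (fact p) / (1 - g) ^ S p.
Proof.
  intros Hg. revert n. induction p as [|p IH]; intros n.
  - assert (E : forall n, poly_geom_sum 0 g n * (1 - g) = g - g ^ S n).
    { unfold poly_geom_sum. induction n0 as [|n0 IHn]; cbn [sumR]; [simpl; ring|].
      rewrite Rmult_plus_distr_r, IHn. simpl. ring. }
    assert (0 <= g ^ S n) by (apply pow_le; lra).
    specialize (E n). simpl. apply (Rmult_le_reg_r (1 - g)); [lra|].
    rewrite E. field_simplify; lra.
  - pose proof (poly_geom_sum_succ_le p g n Hg) as R1.
    assert (0 <= INR n ^ S p * g ^ S n)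
      by (apply Rmult_le_pos; apply pow_le; [apply pos_INR|lra]).
    assert (Hfp : 0 < (1 - g) ^ S p) by (apply pow_lt; lra).
    assert (Hp : (1 - g) * poly_geom_sum (S p) g n <= INR (S p) * (INR (fact p) / (1 - g) ^ S p)).
    { pose proof (Rmult_le_compat_l (INR (S p)) _ _ (pos_INR _) (IH n)). lra. }
    replace (INR (fact (S p)) / (1 - g) ^ S (S p))
      with (INR (S p) * (INR (fact p) / (1 - g) ^ S p) / (1 - g)).
    2: { rewrite fact_simpl, mult_INR. simpl pow. field.
         repeat split; try lra; apply pow_nonzero; lra. }
    apply (Rmult_le_reg_l (1 - g)); [lra|].
    replace ((1 - g) * (INR (S p) * (INR (fact p) / (1 - g) ^ S p) / (1 - g)))
      with (INR (S p) * (INR (fact p) / (1 - g) ^ S p)) by (field; lra).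
    exact Hp.
Qed.

(* Half of [b^(i+1) = sqrt b^(i+1) * sqrt b^(i+1)] absorbs the weight [(i+1)^p] into a
   convergent series, the other half gives the decay [sqrt b ^ n] of the tail. *)
Lemma sumC_tail_le (g : nat -> C) K p b n d : 0 < b < 1 -> 0 <= K ->
  (forall i, Cmod (g i) <= K * (INR (S i) ^ p * b ^ S i)) ->
  Cmod (sumC g (n + d) - sumC g n) <= K * sqrt b ^ n * (INR (fact p) / (1 - sqrt b) ^ S p).
Proof.
  intros Hb HK Hg. set (r := sqrt b).
  assert (Hr : 0 < r < 1).
  { split; [apply sqrt_lt_R0; lra|rewrite <- sqrt_1; apply sqrt_lt_1; lra]. }
  assert (Hrn : 0 <= r ^ n) by (apply pow_le; lra).
  set (h := fun i => INR (S i) ^ p * r ^ S i).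
  assert (Hh : forall i, 0 <= h i) by (intros; apply Rmult_le_pos; apply pow_le; [apply pos_INR|lra]).
  rewrite sumC_add_sub. eapply Rle_trans; [apply Cmod_sumC|].
  apply Rle_trans with (sumR (fun i => K * r ^ n * h (n + i)%nat) d).
  { apply sumR_le. intros i _. eapply Rle_trans; [apply Hg|].
    assert (Hbb : b ^ S (n + i) = r ^ S (n + i) * r ^ S (n + i))
      by (rewrite <- Rpow_mult_distr; unfold r; now rewrite sqrt_sqrt by lra).
    assert (r ^ S (n + i) <= r ^ n) by (apply pow_le_pow_le_1; lra || lia).
    assert (0 <= r ^ S (n + i)) by (apply pow_le; lra).
    assert (0 <= INR (S (n + i)) ^ p) by (apply pow_le, pos_INR).
    rewrite Hbb. unfold h.
    replace (K * r ^ n * (INR (S (n + i)) ^ p * r ^ S (n + i)))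
      with (K * (INR (S (n + i)) ^ p * r ^ S (n + i)) * r ^ n) by ring.
    replace (K * (INR (S (n + i)) ^ p * (r ^ S (n + i) * r ^ S (n + i))))
      with (K * (INR (S (n + i)) ^ p * r ^ S (n + i)) * r ^ S (n + i)) by ring.
    apply Rmult_le_compat_l; [apply Rmult_le_pos; [|apply Rmult_le_pos]|]; assumption. }
  rewrite sumR_scal. apply Rmult_le_compat_l; [apply Rmult_le_pos; assumption|].
  eapply Rle_trans; [apply (sumR_shift_le h n d Hh)|].
  apply (poly_geom_sum_le p r (n + d)). lra.
Qed.

Definition unif_cauchy_bdd (s : nat -> R -> C) (D : R -> Prop) :=
  (forall eps, 0 < eps -> exists N, forall n m x, D x -> (N <= n)%nat -> (N <= m)%nat ->
      Cmod (s n x - s m x) < eps)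
  /\ exists B, 0 <= B /\ forall n x, D x -> Cmod (s n x) <= B.

Lemma unif_cauchy_bdd_CVU s D : unif_cauchy_bdd s D -> CVU_cauchyC s D.
Proof.
  intros [H _]. split; intros eps; destruct (H eps (cond_pos eps)) as [N HN]; exists N;
    intros n m x Dx Hn Hm; specialize (HN n m x Dx Hn Hm);
    pose proof (Rmax_Cmod (s n x - s m x)%C) as M;
    destruct (s n x) as [a b], (s m x) as [c d]; simpl in *;
    (eapply Rle_lt_trans; [eapply Rle_trans; [|exact M]|exact HN]);
    [apply Rmax_l|apply Rmax_r].
Qed.

Lemma unif_cauchy_bdd_ext s r D : (forall n x, D x -> s n x = r n x) ->
  unif_cauchy_bdd s D -> unif_cauchy_bdd r D.
Proof.
  intros E [H1 [B [HB H2]]]. split.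
  - intros eps He. destruct (H1 eps He) as [N HN]. exists N. intros n m x Dx Hn Hm.
    rewrite <- !E by assumption. auto.
  - exists B. split; auto. intros n x Dx. rewrite <- E by assumption. auto.
Qed.

Lemma unif_cauchy_bdd_const c D : unif_cauchy_bdd (fun _ _ => c) D.
Proof.
  split.
  - intros eps He. exists 0%nat. intros n m x _ _ _.
    replace (c - c)%C with (RtoC 0) by ring. rewrite Cmod_0. lra.
  - exists (Cmod c). split; [apply Cmod_ge_0|intros; lra].
Qed.

Lemma unif_cauchy_bdd_plus s r D : unif_cauchy_bdd s D -> unif_cauchy_bdd r D ->
  unif_cauchy_bdd (fun n x => s n x + r n x)%C D.
Proof.
  intros [S1 [B1 [HB1 S2]]] [R1 [B2 [HB2 R2]]]. split.
  - intros eps He.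
    destruct (S1 (eps / 2) ltac:(lra)) as [N1 HN1], (R1 (eps / 2) ltac:(lra)) as [N2 HN2].
    exists (max N1 N2). intros n m x Dx Hn Hm.
    specialize (HN1 n m x Dx ltac:(lia) ltac:(lia)). specialize (HN2 n m x Dx ltac:(lia) ltac:(lia)).
    replace (s n x + r n x - (s m x + r m x))%C with ((s n x - s m x) + (r n x - r m x))%C by ring.
    eapply Rle_lt_trans; [apply Cmod_triangle|lra].
  - exists (B1 + B2). split; [lra|]. intros n x Dx.
    eapply Rle_trans; [apply Cmod_triangle|]. specialize (S2 n x Dx). specialize (R2 n x Dx). lra.
Qed.

Lemma unif_cauchy_bdd_mult s r D : unif_cauchy_bdd s D -> unif_cauchy_bdd r D ->
  unif_cauchy_bdd (fun n x => s n x * r n x)%C D.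
Proof.
  intros [S1 [B1 [HB1 S2]]] [R1 [B2 [HB2 R2]]]. split.
  - intros eps He.
    set (e' := eps / (B1 + B2 + 1)).
    assert (He' : 0 < e') by (unfold e'; apply Rdiv_lt_0_compat; lra).
    assert (Hlt : (B1 + B2) * e' < eps).
    { replace ((B1 + B2) * e') with (eps - e') by (unfold e'; field; lra). lra. }
    destruct (S1 e' He') as [N1 HN1], (R1 e' He') as [N2 HN2].
    exists (max N1 N2). intros n m x Dx Hn Hm.
    specialize (HN1 n m x Dx ltac:(lia) ltac:(lia)). specialize (HN2 n m x Dx ltac:(lia) ltac:(lia)).
    replace (s n x * r n x - s m x * r m x)%C
      with (s n x * (r n x - r m x) + r m x * (s n x - s m x))%C by ring.
    eapply Rle_lt_trans; [apply Cmod_triangle|]. rewrite !Cmod_mult.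
    assert (Cmod (s n x) * Cmod (r n x - r m x) <= B1 * e')
      by (apply Rmult_le_compat; try apply Cmod_ge_0; auto; lra).
    assert (Cmod (r m x) * Cmod (s n x - s m x) <= B2 * e')
      by (apply Rmult_le_compat; try apply Cmod_ge_0; auto; lra).
    lra.
  - exists (B1 * B2). split; [nra|]. intros n x Dx. rewrite Cmod_mult.
    apply Rmult_le_compat; auto; apply Cmod_ge_0.
Qed.

Lemma unif_cauchy_bdd_eval_expr {A} (val : A -> nat -> R -> C) D :
  (forall a, unif_cauchy_bdd (val a) D) ->
  forall e, unif_cauchy_bdd (fun n x => eval_expr (fun a => val a n x) e) D.
Proof.
  intros H e. induction e as [a| | |e1 IH1 e2 IH2|e1 IH1 e2 IH2]; simpl.
  - apply H.
  - apply unif_cauchy_bdd_const.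
  - apply unif_cauchy_bdd_const.
  - exact (unif_cauchy_bdd_plus _ _ _ IH1 IH2).
  - exact (unif_cauchy_bdd_mult _ _ _ IH1 IH2).
Qed.

Lemma unif_cauchy_bdd_sum (g : nat -> R -> C) D K p b : 0 < b < 1 -> 0 <= K ->
  (forall i x, D x -> Cmod (g i x) <= K * (INR (S i) ^ p * b ^ S i)) ->
  unif_cauchy_bdd (fun n x => sumC (fun i => g i x) n) D.
Proof.
  intros Hb HK Hg.
  set (c := INR (fact p) / (1 - sqrt b) ^ S p).
  assert (Hsb : 0 < sqrt b < 1).
  { split; [apply sqrt_lt_R0; lra|rewrite <- sqrt_1; apply sqrt_lt_1; lra]. }
  assert (Hc : 0 <= c).
  { apply Rmult_le_pos; [apply pos_INR|apply Rlt_le, Rinv_0_lt_compat, pow_lt; lra]. }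
  assert (Tail : forall x n d, D x ->
            Cmod (sumC (fun i => g i x) (n + d) - sumC (fun i => g i x) n) <= K * sqrt b ^ n * c)
    by (intros; apply sumC_tail_le; auto).
  split.
  - intros eps He.
    assert (Hq : 0 < eps / (K * c + 1)) by (apply Rdiv_lt_0_compat; nra).
    destruct (pow_lt_1_zero (sqrt b) ltac:(rewrite Rabs_pos_eq; lra) _ Hq) as [N HN].
    assert (Main : forall n d x, D x -> (N <= n)%nat ->
              Cmod (sumC (fun i => g i x) (n + d) - sumC (fun i => g i x) n) < eps).
    { intros n d x Dx Hn. eapply Rle_lt_trans; [apply Tail, Dx|].
      specialize (HN n Hn). rewrite Rabs_pos_eq in HN by (apply pow_le; lra).
      assert (Hlt : eps / (K * c + 1) * (K * c) < eps).
      { replace (eps / (K * c + 1) * (K * c)) with (eps - eps / (K * c + 1)) by (field; nra).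
        lra. }
      assert (0 <= K * c) by nra. nra. }
    exists N. intros n m x Dx Hn Hm. destruct (Nat.le_ge_cases n m) as [L|L].
    + rewrite <- Cmod_opp.
      replace (- (sumC (fun i => g i x) n - sumC (fun i => g i x) m))%C
        with (sumC (fun i => g i x) (n + (m - n)) - sumC (fun i => g i x) n)%C
        by (now replace (n + (m - n))%nat with m by lia; ring).
      now apply Main.
    + replace n with (m + (n - m))%nat by lia. now apply Main.
  - exists (K * c). split; [nra|]. intros n x Dx.
    pose proof (Tail x 0%nat n Dx) as T. simpl in T.
    replace (sumC (fun i => g i x) n - 0)%C with (sumC (fun i => g i x) n) in T by ring.
    lra.
Qed.

(** * The partial products of [M_0] at real [q] *)

Definition q_exp (m j : nat) : Z := (2 * Z.of_nat j + 1 - Z.of_nat m)%Z.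

Definition w_fac (t : C) (m j : nat) (x : R) : C := (zpowC (RtoC x) (q_exp m j) * Cpow t m)%C.

Definition v_fac (t : C) (m j : nat) (x : R) : C := Cinv (1 - w_fac t m j x)%C.

(* [P_part t n x] is [M0_partial t x n] for real [q = x]. *)
Definition P_part (t : C) (n : nat) (x : R) : C :=
  prodC (fun i => prodC (fun j => v_fac t (S i) j x) (S i)) n.

Lemma zpowC_RtoC x a : 0 < x -> zpowC (RtoC x) a = RtoC (powerRZ x a).
Proof.
  intros Hx. destruct a as [|p|p]; simpl; [reflexivity|symmetry; apply RtoC_pow|].
  rewrite <- RtoC_pow, RtoC_inv; [reflexivity|apply pow_nonzero; lra].
Qed.

Lemma is_deriveC_w_fac t m j x : 0 < x ->
  is_deriveC (w_fac t m j) x (RtoC (IZR (q_exp m j) / x) * w_fac t m j x)%C.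
Proof.
  intros Hx. set (A := IZR (q_exp m j)).
  assert (D1 : is_derive (fun y => exp (A * ln y)) x (exp (A * ln x) * (A * / x)))
    by (auto_derive; [lra|field; lra]).
  pose proof (is_deriveC_mult _ _ _ _ _ (is_deriveC_RtoC _ _ _ D1) (is_deriveC_const (Cpow t m) x)) as D2.
  apply (is_deriveC_ext_loc _ (w_fac t m j) _ _ 0 (x + 1)) in D2; [|lra|].
  - eapply is_deriveC_eq; [exact D2|].
    unfold w_fac. rewrite zpowC_RtoC, powerRZ_Rpower by lra.
    unfold Rpower, Rdiv. rewrite !RtoC_mult. fold A. ring.
  - intros y Hy. unfold w_fac.
    rewrite zpowC_RtoC, powerRZ_Rpower by lra. reflexivity.
Qed.

Lemma is_deriveC_v_fac t m j x : 0 < x -> w_fac t m j x <> 1%C ->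
  is_deriveC (v_fac t m j) x
    (RtoC (IZR (q_exp m j) / x) * (w_fac t m j x * (v_fac t m j x * v_fac t m j x)))%C.
Proof.
  intros Hx Hw.
  assert (Hnz : (1 - w_fac t m j x)%C <> 0%C).
  { intro E. apply Hw. apply Ceq_minus in E.
    replace (w_fac t m j x) with (1 - (1 - w_fac t m j x))%C by ring. rewrite E. ring. }
  assert (D1 : is_deriveC (fun y => 1 - w_fac t m j y)%C x
                          (0 - RtoC (IZR (q_exp m j) / x) * w_fac t m j x)%C).
  { unfold Cminus. apply is_deriveC_plus; [apply is_deriveC_const|].
    eapply is_deriveC_eq; [apply is_deriveC_opp, (is_deriveC_w_fac t m j x Hx)|ring]. }
  eapply is_deriveC_eq; [apply (is_deriveC_inv _ _ _ D1 Hnz)|].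
  unfold v_fac. ring.
Qed.

(* [tau t j m k] is [(x d/dx)^j (w v) / a^j] for the factor [v = 1/(1-w)] of index [(m,k)],
   whose exponent of [q] is [a]; [H_part t j n] collects [sum a^(j+1) tau_j], which is the
   [j]-th derivative of the logarithmic derivative of [P_part t n]. *)
Definition tau_expr (j : nat) : expr bool :=
  Nat.iter j (deriv_expr deriv_wv) (EMul (EAtom true) (EAtom false)).

Definition tau (t : C) (j m k : nat) (x : R) : C :=
  eval_expr (wv_val (w_fac t m k x) (v_fac t m k x)) (tau_expr j).

Definition coef (m k j : nat) : C := RtoC (IZR (q_exp m k) ^ S j).

Definition H_part (t : C) (j n : nat) (x : R) : C :=
  sumC (fun i => sumC (fun k => coef (S i) k j * tau t j (S i) k x) (S i))%C n.

(* [∂^i P = P * Q_i(H_0, H_1, ...)] with [Q_0 = 1] and [Q_(i+1) = H_0 Q_i + Q_i'],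
   where the derivation maps [H_j] to [H_(j+1)]. *)
Fixpoint Q_expr (i : nat) : expr nat :=
  match i with
  | O => EOne
  | S i => EAdd (EMul (EAtom 0%nat) (Q_expr i)) (deriv_expr (fun j => EAtom (S j)) (Q_expr i))
  end.

Definition dP_part (t : C) (i n : nat) (x : R) : C :=
  (P_part t n x * eval_expr (fun j => H_part t j n x) (Q_expr i))%C.

Definition admissible (t : C) (x : R) :=
  0 < x /\ forall m k, (k < m)%nat -> w_fac t m k x <> 1%C.

Lemma RtoC_neq_0 x : x <> 0 -> RtoC x <> 0%C.
Proof. intros H E. apply H. now injection E. Qed.

Lemma is_deriveC_tau t j m k x : 0 < x -> w_fac t m k x <> 1%C ->
  is_deriveC (tau t j m k) x (RtoC (IZR (q_exp m k) / x) * tau t (S j) m k x)%C.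
Proof.
  intros Hx Hw.
  apply (is_deriveC_eval_expr deriv_wv (fun b y => wv_val (w_fac t m k y) (v_fac t m k y) b)).
  intros [|]; simpl.
  - now apply is_deriveC_w_fac.
  - now apply is_deriveC_v_fac.
Qed.

Lemma is_deriveC_H_part t j n x : admissible t x ->
  is_deriveC (H_part t j n) x (H_part t (S j) n x / RtoC x)%C.
Proof.
  intros [Hx Hw]. unfold H_part.
  eapply is_deriveC_eq.
  - apply is_deriveC_sum with (d := fun i =>
      sumC (fun k => (coef (S i) k (S j) * tau t (S j) (S i) k x / RtoC x)%C) (S i)).
    intros i Hi. apply is_deriveC_sum. intros k Hk.
    eapply is_deriveC_eq; [apply (is_deriveC_mult (fun _ => coef (S i) k j) (tau t j (S i) k) x);
      [apply is_deriveC_const|apply is_deriveC_tau; auto]|].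
    unfold coef. rewrite RtoC_div by lra.
    change (IZR (q_exp (S i) k) ^ S (S j)) with (IZR (q_exp (S i) k) * IZR (q_exp (S i) k) ^ S j).
    rewrite RtoC_mult. field. apply RtoC_neq_0; lra.
  - rewrite <- sumC_div. apply sumC_ext. intros i _. now rewrite <- sumC_div.
Qed.

Lemma is_deriveC_P_part t n x : admissible t x ->
  is_deriveC (P_part t n) x (P_part t n x * H_part t 0 n x / RtoC x)%C.
Proof.
  intros [Hx Hw]. unfold P_part.
  eapply is_deriveC_eq.
  - apply is_deriveC_prod with
      (e := fun i => (sumC (fun k => coef (S i) k 0 * tau t 0 (S i) k x) (S i) / RtoC x)%C).
    intros i Hi. eapply is_deriveC_eq.
    + apply is_deriveC_prod with (e := fun k => (coef (S i) k 0 * tau t 0 (S i) k x / RtoC x)%C).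
      intros k Hk. eapply is_deriveC_eq; [apply is_deriveC_v_fac; auto|].
      unfold coef, tau, tau_expr; simpl. rewrite RtoC_div, Rmult_1_r by lra.
      field. apply RtoC_neq_0; lra.
    + now rewrite sumC_div.
  - unfold H_part. rewrite sumC_div. unfold Cdiv. ring.
Qed.

Lemma is_deriveC_dP_part t i n x : admissible t x ->
  is_deriveC (dP_part t i n) x (dP_part t (S i) n x / RtoC x)%C.
Proof.
  intros Hadm. unfold dP_part.
  assert (E : is_deriveC (fun y => eval_expr (fun j => H_part t j n y) (Q_expr i)) x
                (/ RtoC x * eval_expr (fun j => H_part t j n x) (deriv_expr (fun j => EAtom (S j)) (Q_expr i)))%C).
  { apply (is_deriveC_eval_expr (fun j => EAtom (S j)) (fun j => H_part t j n)).
    intros j. simpl. eapply is_deriveC_eq; [now apply is_deriveC_H_part|]. unfold Cdiv. ring. }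
  eapply is_deriveC_eq; [apply (is_deriveC_mult _ _ _ _ _ (is_deriveC_P_part t n x Hadm) E)|].
  simpl. unfold Cdiv. ring.
Qed.

Lemma q_exp_abs m k : (k < m)%nat -> (Z.abs_nat (q_exp m k) <= m - 1)%nat.
Proof. intros H. unfold q_exp. lia. Qed.

Lemma Rabs_q_exp m k : (k < m)%nat -> Rabs (IZR (q_exp m k)) <= INR m - 1.
Proof.
  intros H. rewrite Rabs_Zabs.
  assert (HZ : (Z.abs (q_exp m k) <= Z.of_nat m - 1)%Z) by (unfold q_exp; lia).
  apply IZR_le in HZ. now rewrite minus_IZR, <- INR_IZR_INZ in HZ.
Qed.

Lemma powerRZ_le_inv_pow x a s : 0 < s < x -> x < / s -> s < 1 ->
  powerRZ x a <= (/ s) ^ Z.abs_nat a.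
Proof.
  intros H1 H2 H3. destruct a as [|p|p]; simpl; [lra|apply pow_incr; lra|].
  rewrite <- pow_inv. apply pow_incr. split.
  - apply Rlt_le, Rinv_0_lt_compat; lra.
  - apply Rlt_le, Rinv_lt_contravar; nra.
Qed.

Lemma w_divisible_tau_expr j : w_divisible (tau_expr j) = true.
Proof. induction j as [|j IH]; [reflexivity|]. now apply w_divisible_deriv. Qed.

Lemma tau_bound j : exists K b, 0 <= K /\ forall t m k x, Cmod (w_fac t m k x) < 1 ->
  Cmod (tau t j m k x) <= K * Cmod (w_fac t m k x) * (/ (1 - Cmod (w_fac t m k x))) ^ b.
Proof.
  destruct (eval_wv_bound (tau_expr j)) as [K [b [HK H]]]. exists K, b. split; [exact HK|].
  intros t m k x Hw. unfold tau.
  pose proof (H _ (v_fac t m k x) Hw (Cmod_inv_1_sub_le _ Hw)) as B.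
  now rewrite w_divisible_tau_expr in B.
Qed.

Lemma coef_bound m k j : (k < m)%nat -> Cmod (coef m k j) <= INR m ^ S j.
Proof.
  intros Hk. unfold coef. rewrite Cmod_R, <- RPow_abs. apply pow_incr.
  pose proof (Rabs_q_exp m k Hk). split; [apply Rabs_pos|lra].
Qed.

Lemma H_part_term_bound j : exists K b, 0 <= K /\ forall t i x r, 0 <= r < 1 ->
  (forall k, (k < S i)%nat -> Cmod (w_fac t (S i) k x) <= r ^ S i) ->
  Cmod (sumC (fun k => coef (S i) k j * tau t j (S i) k x)%C (S i))
    <= K * (/ (1 - r)) ^ b * (INR (S i) ^ S (S j) * r ^ S i).
Proof.
  destruct (tau_bound j) as [K [b [HK H]]]. exists K, b. split; [exact HK|].
  intros t i x r Hr Hw.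
  assert (Hri : r ^ S i <= r) by (rewrite <- (pow_1 r) at 2; apply pow_le_pow_le_1; lra || lia).
  assert (Hq : 0 <= (/ (1 - r)) ^ b) by (apply pow_le, Rlt_le, Rinv_0_lt_compat; lra).
  eapply Rle_trans; [apply Cmod_sumC|].
  eapply Rle_trans; [apply (sumR_le _ (fun _ => INR (S i) ^ S j * (K * (/ (1 - r)) ^ b * r ^ S i)))|].
  - intros k Hk. rewrite Cmod_mult.
    apply Rmult_le_compat; [apply Cmod_ge_0|apply Cmod_ge_0|now apply coef_bound|].
    specialize (Hw k Hk). pose proof (Cmod_ge_0 (w_fac t (S i) k x)).
    eapply Rle_trans; [apply H; lra|].
    rewrite Rmult_assoc, (Rmult_assoc K), (Rmult_comm (Cmod _)).
    apply Rmult_le_compat_l; [exact HK|].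
    apply Rmult_le_compat; [apply pow_le, Rlt_le, Rinv_0_lt_compat; lra|apply Cmod_ge_0| |exact Hw].
    apply pow_incr. split; [apply Rlt_le, Rinv_0_lt_compat; lra|].
    apply Rinv_le_contravar; lra.
  - rewrite sumR_const. right. simpl. ring.
Qed.

Lemma P_part_telescope t n x :
  P_part t n x = (1 + sumC (fun i => P_part t (S i) x - P_part t i x) n)%C.
Proof.
  induction n as [|n IH]; [unfold P_part; simpl; ring|].
  simpl sumC. rewrite Cplus_assoc, <- IH. ring.
Qed.

Section Window.

Variable t : C.
Hypothesis Ht : 0 < Cmod t < 1.

(* On the window [s < q < 1/s] with [s = sqrt |t|], every factor satisfies
   [|q^a t^m| <= s^(m+1)], since [|a| <= m - 1]. *)
Let s := sqrt (Cmod t).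

Lemma window_radius : 0 < s < 1 /\ s * s = Cmod t.
Proof.
  unfold s. split; [split|].
  - apply sqrt_lt_R0; lra.
  - rewrite <- sqrt_1. apply sqrt_lt_1; lra.
  - apply sqrt_sqrt; lra.
Qed.

Definition in_window (x : R) := s < x < / s.

Lemma w_fac_window_bound m k x : (k < m)%nat -> in_window x -> Cmod (w_fac t m k x) <= s ^ S m.
Proof.
  intros Hk [Hx1 Hx2]. destruct window_radius as [[Hs0 Hs1] Hss].
  unfold w_fac. rewrite Cmod_mult, zpowC_RtoC, Cmod_R, Cmod_pow by lra.
  rewrite Rabs_pos_eq by (apply Rlt_le, powerRZ_lt; lra).
  assert (P1 : powerRZ x (q_exp m k) <= (/ s) ^ (m - 1)).
  { eapply Rle_trans; [apply (powerRZ_le_inv_pow x _ s); auto|].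
    apply Rle_pow; [rewrite <- Rinv_1; apply Rinv_le_contravar; lra|now apply q_exp_abs]. }
  destruct m as [|m]; [lia|]. replace (S m - 1)%nat with m in P1 by lia.
  rewrite <- Hss, Rpow_mult_distr.
  assert (0 <= s ^ S m * s ^ S m) by (apply Rmult_le_pos; apply pow_le; lra).
  eapply Rle_trans; [apply Rmult_le_compat_r; [assumption|exact P1]|].
  replace (s ^ S m * s ^ S m) with (s ^ m * s ^ (S (S m))) by (simpl; ring).
  rewrite <- Rmult_assoc, <- Rpow_mult_distr, Rinv_l, pow1 by lra. lra.
Qed.

Lemma window_pow_le m : s ^ S m <= s.
Proof.
  destruct window_radius as [[Hs0 Hs1] _].
  rewrite <- (pow_1 s) at 2. apply pow_le_pow_le_1; lra || lia.
Qed.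

Lemma w_fac_window_lt_1 m k x : (k < m)%nat -> in_window x -> Cmod (w_fac t m k x) < 1.
Proof.
  intros Hk Hx. pose proof (w_fac_window_bound m k x Hk Hx). pose proof (window_pow_le m).
  destruct window_radius as [[Hs0 Hs1] _]. lra.
Qed.

Lemma in_window_admissible x : in_window x -> admissible t x.
Proof.
  intros Hx. split.
  - destruct Hx. destruct window_radius as [[Hs0 Hs1] _]. lra.
  - intros m k Hk E. pose proof (w_fac_window_lt_1 m k x Hk Hx) as L.
    rewrite E, Cmod_1 in L. lra.
Qed.

Lemma unif_cauchy_bdd_H_part j : unif_cauchy_bdd (H_part t j) in_window.
Proof.
  destruct (H_part_term_bound j) as [K [b [HK H]]].
  destruct window_radius as [[Hs0 Hs1] _].
  apply (unif_cauchy_bdd_sum (fun i x => sumC (fun k => coef (S i) k j * tau t j (S i) k x)%C (S i))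
           in_window (K * (/ (1 - s)) ^ b) (S (S j)) s); [lra| |].
  - apply Rmult_le_pos; [exact HK|apply pow_le, Rlt_le, Rinv_0_lt_compat; lra].
  - intros i x Hx. apply H; [lra|]. intros k Hk.
    eapply Rle_trans; [now apply w_fac_window_bound|apply pow_le_pow_le_1; lra || lia].
Qed.

Lemma v_fac_sub_1_window_bound m k x : in_window x -> (k < m)%nat ->
  Cmod (v_fac t m k x - 1)%C <= s ^ m / (1 - s).
Proof.
  intros Hx Hk. destruct window_radius as [[Hs0 Hs1] _].
  pose proof (w_fac_window_lt_1 _ _ _ Hk Hx) as W1.
  pose proof (w_fac_window_bound _ _ _ Hk Hx) as W2.
  pose proof (window_pow_le m) as W3.
  assert (W4 : Cmod (w_fac t m k x) <= s ^ m).
  { eapply Rle_trans; [exact W2|apply pow_le_pow_le_1; lra || lia]. }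
  eapply Rle_trans; [apply Cmod_inv_1_sub_sub_1_le, W1|].
  apply Rmult_le_compat; [apply Cmod_ge_0|apply Rlt_le, Rinv_0_lt_compat; lra|exact W4|].
  apply Rinv_le_contravar; lra.
Qed.

Definition window_const := / (1 - s) ^ 3.

Lemma window_const_sum_bound n :
  sumR (fun i => INR (S i) * (s ^ S i / (1 - s))) n <= window_const.
Proof.
  destruct window_radius as [[Hs0 Hs1] _].
  replace (sumR (fun i => INR (S i) * (s ^ S i / (1 - s))) n) with (/ (1 - s) * poly_geom_sum 1 s n).
  2: { unfold poly_geom_sum. rewrite <- sumR_scal. apply sumR_ext. intros i _. simpl. field. lra. }
  pose proof (poly_geom_sum_le 1 s n ltac:(lra)) as B. simpl in B.
  unfold window_const. apply (Rmult_le_reg_l (1 - s)); [lra|].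
  replace ((1 - s) * (/ (1 - s) * poly_geom_sum 1 s n)) with (poly_geom_sum 1 s n) by (field; lra).
  replace ((1 - s) * / (1 - s) ^ 3) with (1 / ((1 - s) * ((1 - s) * 1))) by (field; lra).
  lra.
Qed.

Lemma window_const_term_bound m : INR m * (s ^ m / (1 - s)) <= window_const.
Proof.
  destruct window_radius as [[Hs0 Hs1] _].
  destruct m as [|m].
  - simpl. rewrite Rmult_0_l. apply Rlt_le, Rinv_0_lt_compat, pow_lt. lra.
  - eapply Rle_trans; [|apply (window_const_sum_bound (S m))]. cbn [sumR].
    assert (0 <= sumR (fun i => INR (S i) * (s ^ S i / (1 - s))) m); [|lra].
    apply sumR_nonneg. intros. apply Rmult_le_pos; [apply pos_INR|].
    apply Rmult_le_pos; [apply pow_le; lra|apply Rlt_le, Rinv_0_lt_compat; lra].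
Qed.

Lemma window_eps_nonneg m : 0 <= s ^ m / (1 - s).
Proof.
  destruct window_radius as [[Hs0 Hs1] _].
  apply Rmult_le_pos; [apply pow_le; lra|apply Rlt_le, Rinv_0_lt_compat; lra].
Qed.

Lemma P_part_window_bound n x : in_window x -> Cmod (P_part t n x) <= exp window_const.
Proof.
  intros Hx. eapply Rle_trans; [|apply exp_le_compat, (window_const_sum_bound n)].
  induction n as [|n IH]; [unfold P_part; simpl; rewrite exp_0, Cmod_1; lra|].
  change (P_part t (S n) x) with (P_part t n x * prodC (fun j => v_fac t (S n) j x) (S n))%C.
  rewrite Cmod_mult. cbn [sumR]. rewrite exp_plus.
  apply Rmult_le_compat; [apply Cmod_ge_0|apply Cmod_ge_0|exact IH|].
  destruct (prodC_near_1 (fun j => v_fac t (S n) j x) (S n) _ (window_eps_nonneg (S n))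
              (fun k => v_fac_sub_1_window_bound (S n) k x Hx)) as [_ B].
  eapply Rle_trans; [exact B|]. apply pow_1_plus_le_exp, window_eps_nonneg.
Qed.

Lemma P_part_step_window_bound i x : in_window x ->
  Cmod (P_part t (S i) x - P_part t i x)%C
    <= exp window_const * exp window_const / (1 - s) * (INR (S i) ^ 1 * s ^ S i).
Proof.
  intros Hx. destruct window_radius as [[Hs0 Hs1] _].
  replace (P_part t (S i) x - P_part t i x)%C
    with (P_part t i x * (prodC (fun j => v_fac t (S i) j x) (S i) - 1))%C
    by (change (P_part t (S i) x) with (P_part t i x * prodC (fun j => v_fac t (S i) j x) (S i))%C; ring).
  rewrite Cmod_mult.
  set (e := s ^ S i / (1 - s)).
  pose proof (window_eps_nonneg (S i)) as He.
  destruct (prodC_near_1 (fun j => v_fac t (S i) j x) (S i) e He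
              (fun k => v_fac_sub_1_window_bound (S i) k x Hx)) as [A _].
  assert (B : (1 + e) ^ S i <= exp window_const).
  { eapply Rle_trans; [apply pow_1_plus_le_exp, He|].
    apply exp_le_compat, window_const_term_bound. }
  pose proof (pow_1_plus_sub_1_le e (S i) He) as C.
  assert (0 <= INR (S i) * e) by (apply Rmult_le_pos; [apply pos_INR|exact He]).
  assert (D : Cmod (prodC (fun j => v_fac t (S i) j x) (S i) - 1)%C <= INR (S i) * e * exp window_const).
  { eapply Rle_trans; [exact A|]. eapply Rle_trans; [exact C|]. now apply Rmult_le_compat_l. }
  eapply Rle_trans.
  - apply Rmult_le_compat; [apply Cmod_ge_0|apply Cmod_ge_0|apply (P_part_window_bound i x Hx)|exact D].
  - right. unfold e. simpl. field. lra.
Qed.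

Lemma unif_cauchy_bdd_P_part : unif_cauchy_bdd (P_part t) in_window.
Proof.
  destruct window_radius as [[Hs0 Hs1] _].
  apply unif_cauchy_bdd_ext with (s := fun n x => (1 + sumC (fun i => P_part t (S i) x - P_part t i x) n)%C).
  { intros n x _. symmetry. apply P_part_telescope. }
  apply (unif_cauchy_bdd_plus (fun _ _ => RtoC 1)); [apply unif_cauchy_bdd_const|].
  apply (unif_cauchy_bdd_sum (fun i x => P_part t (S i) x - P_part t i x)%C in_window
           (exp window_const * exp window_const / (1 - s)) 1 s); [lra| |].
  - apply Rmult_le_pos; [apply Rmult_le_pos; apply Rlt_le, exp_pos|apply Rlt_le, Rinv_0_lt_compat; lra].
  - intros i x Hx. now apply P_part_step_window_bound.
Qed.

Lemma unif_cauchy_bdd_dP_part i : unif_cauchy_bdd (dP_part t i) in_window.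
Proof.
  apply (unif_cauchy_bdd_mult (P_part t) (fun n x => eval_expr (fun j => H_part t j n x) (Q_expr i))).
  - apply unif_cauchy_bdd_P_part.
  - apply (unif_cauchy_bdd_eval_expr (fun j => H_part t j)). intros; apply unif_cauchy_bdd_H_part.
Qed.

End Window.

(** * The bound on [F_k] *)

Definition is_lim_seqC (u : nat -> C) :=
  is_lim_seq (fun n => fst (u n)) (fst (lim_seqC u)) /\
  is_lim_seq (fun n => snd (u n)) (snd (lim_seqC u)).

Lemma CVU_cauchyC_is_lim_seqC (s : nat -> R -> C) D x :
  CVU_cauchyC s D -> D x -> is_lim_seqC (fun n => s n x).
Proof.
  intros [H1 H2] Dx.
  split; [exact (CVU_cauchy_is_lim_seq _ _ x H1 Dx)|exact (CVU_cauchy_is_lim_seq _ _ x H2 Dx)].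
Qed.

Lemma seq_limC_lim_seqC (u : nat -> C) : is_lim_seqC u -> seq_limC u = lim_seqC u.
Proof.
  intros [H1 H2].
  assert (F : filterlim u eventually (locally (lim_seqC u))).
  { apply filterlim_locally. intros eps.
    apply is_lim_seq_spec in H1. apply is_lim_seq_spec in H2.
    eapply filter_imp; [|exact (filter_and _ _ (H1 eps) (H2 eps))].
    intros n [A B]. split; assumption. }
  pose proof (epsilon_spec (inhabits (RtoC 0)) (fun l : C => filterlim u eventually (locally l))
                (ex_intro (fun l : C => filterlim u eventually (locally l)) _ F)) as S.
  exact (filterlim_locally_unique (K := C_AbsRing) (V := C_NormedModule) u _ _ S F).
Qed.

Lemma is_lim_seqC_Cmod (u : nat -> C) :
  is_lim_seqC u -> is_lim_seq (fun n => Cmod (u n)) (Cmod (lim_seqC u)).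
Proof.
  intros [H1 H2]. destruct (lim_seqC u) as [l1 l2]; simpl in H1, H2.
  assert (A : is_lim_seq (fun n => fst (u n) * fst (u n) + snd (u n) * snd (u n)) (l1 * l1 + l2 * l2))
    by (apply is_lim_seq_plus'; apply is_lim_seq_mult'; assumption).
  assert (Hp : 0 <= l1 * l1 + l2 * l2) by nra.
  replace (Cmod (l1, l2)) with (sqrt (l1 * l1 + l2 * l2)) by (unfold Cmod; simpl; f_equal; ring).
  eapply is_lim_seq_ext; [|exact (is_lim_seq_continuous sqrt _ _ (continuity_pt_sqrt _ Hp) A)].
  intros n. unfold Cmod. f_equal. ring.
Qed.

(* The bound survives [Cinv 0 = 0] when the denominator's limit vanishes. *)
Lemma Cmod_div_lim_seqC_le (u v : nat -> C) B :
  is_lim_seqC u -> is_lim_seqC v -> 0 <= B -> (forall n, Cmod (u n) <= B * Cmod (v n)) ->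
  Cmod (lim_seqC u / lim_seqC v) <= B.
Proof.
  intros Lu Lv HB Huv.
  pose proof (is_lim_seq_le _ _ _ _ Huv (is_lim_seqC_Cmod u Lu)
                (is_lim_seq_scal_l _ B _ (is_lim_seqC_Cmod v Lv))) as L.
  simpl in L.
  destruct (Req_dec (Cmod (lim_seqC v)) 0) as [E|E].
  - apply Cmod_eq_0 in E. unfold Cdiv. rewrite E.
    replace (/ RtoC 0)%C with (RtoC 0) by (unfold Cinv, RtoC; simpl; f_equal; unfold Rdiv; ring).
    rewrite Cmult_0_r, Cmod_0. exact HB.
  - assert (Hnz : lim_seqC v <> 0%C) by (intro Z; apply E; rewrite Z; apply Cmod_0).
    rewrite Cmod_div by exact Hnz. pose proof (Cmod_ge_0 (lim_seqC v)).
    apply (Rmult_le_reg_r (Cmod (lim_seqC v))); [lra|].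
    unfold Rdiv. rewrite Rmult_assoc, Rinv_l by exact E. lra.
Qed.

Lemma lim_seqC_ext (u v : nat -> C) : (forall n, u n = v n) -> lim_seqC u = lim_seqC v.
Proof. intros E. unfold lim_seqC. f_equal; f_equal; apply Lim_seq_ext; intros n; now rewrite E. Qed.

Lemma one_in_window t : 0 < Cmod t < 1 -> in_window t 1.
Proof.
  intros Ht. destruct (window_radius t Ht) as [[Hs0 Hs1] _]. split; [exact Hs1|].
  rewrite <- Rinv_1 at 1. apply Rinv_lt_contravar; lra.
Qed.

Lemma Mk_lim_seqC k t : 0 < Cmod t < 1 -> Mk k t = lim_seqC (fun n => dP_part t k n 1).
Proof.
  intros Ht. destruct (window_radius t Ht) as [[Hs0 Hs1] _].
  apply (iter_qD_lim_seq (fun q => M0 t q) (dP_part t) _ (/ sqrt (Cmod t)) Hs0).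
  - intros i n x Hx. apply is_deriveC_dP_part, in_window_admissible; assumption.
  - intros i. apply unif_cauchy_bdd_CVU, unif_cauchy_bdd_dP_part, Ht.
  - intros x Hx. unfold M0. change (M0_partial t (RtoC x)) with (fun n => P_part t n x).
    rewrite seq_limC_lim_seqC.
    + apply lim_seqC_ext. intros n. unfold dP_part. simpl. ring.
    + apply (CVU_cauchyC_is_lim_seqC (P_part t) (in_window t));
        [apply unif_cauchy_bdd_CVU, unif_cauchy_bdd_P_part, Ht|exact Hx].
  - apply one_in_window, Ht.
Qed.

Lemma w_fac_at_1 t m k : w_fac t m k 1 = Cpow t m.
Proof. unfold w_fac. rewrite zpowC_RtoC, powerRZ_R1 by lra. ring. Qed.

(* At [q = 1] the [m] factors of the [m]-th inner product all equal [1/(1-t^m)]. *)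
Lemma MacMahon_partial_P_part t n : 0 < Cmod t < 1 ->
  prodC (fun i => Cinv (Cpow (1 - Cpow t (S i)) (S i))) n = P_part t n 1.
Proof.
  intros Ht. induction n as [|n IH]; [reflexivity|].
  change (P_part t (S n) 1) with (P_part t n 1 * prodC (fun j => v_fac t (S n) j 1) (S n))%C.
  change (prodC (fun i => Cinv (Cpow (1 - Cpow t (S i)) (S i))) (S n)) with
    (prodC (fun i => Cinv (Cpow (1 - Cpow t (S i)) (S i))) n * Cinv (Cpow (1 - Cpow t (S n)) (S n)))%C.
  rewrite IH. f_equal.
  assert (Hnz : (1 - Cpow t (S n))%C <> 0%C).
  { intro E. assert (E2 : Cpow t (S n) = 1%C).
    { replace (Cpow t (S n)) with (1 - (1 - Cpow t (S n)))%C by ring. rewrite E. ring. }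
    apply (f_equal Cmod) in E2. rewrite Cmod_pow, Cmod_1 in E2.
    assert (Cmod t ^ S n < 1) by (apply pow_lt_1_compat; lra || lia). lra. }
  rewrite (prodC_ext _ (fun _ => Cinv (1 - Cpow t (S n)))).
  - symmetry. now apply prodC_inv_const.
  - intros i _. unfold v_fac. now rewrite w_fac_at_1.
Qed.

Lemma MacMahon_lim_seqC t : 0 < Cmod t < 1 -> MacMahon t = lim_seqC (fun n => P_part t n 1).
Proof.
  intros Ht. unfold MacMahon.
  replace (prodC (fun i => Cinv (Cpow (1 - Cpow t (S i)) (S i))))
    with (fun n => P_part t n 1)
    by (apply functional_extensionality; intros n; symmetry; now apply MacMahon_partial_P_part).
  apply seq_limC_lim_seqC, (CVU_cauchyC_is_lim_seqC (P_part t) (in_window t));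
    [apply unif_cauchy_bdd_CVU, unif_cauchy_bdd_P_part, Ht|apply one_in_window, Ht].
Qed.

Lemma Fk_le k t B : 0 < Cmod t < 1 -> 0 <= B ->
  (forall n, Cmod (eval_expr (fun j => H_part t j n 1) (Q_expr k)) <= B) ->
  Cmod (Fk k t) <= B.
Proof.
  intros Ht HB HQ. unfold Fk. rewrite Mk_lim_seqC, MacMahon_lim_seqC by exact Ht.
  pose proof (one_in_window t Ht) as H1.
  apply Cmod_div_lim_seqC_le; [| |exact HB|].
  - exact (CVU_cauchyC_is_lim_seqC _ _ 1 (unif_cauchy_bdd_CVU _ _ (unif_cauchy_bdd_dP_part t Ht k)) H1).
  - exact (CVU_cauchyC_is_lim_seqC _ _ 1 (unif_cauchy_bdd_CVU _ _ (unif_cauchy_bdd_P_part t Ht)) H1).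
  - intros n. unfold dP_part. rewrite Cmod_mult, Rmult_comm.
    apply Rmult_le_compat_r; [apply Cmod_ge_0|apply HQ].
Qed.

Lemma H_part_at_1_bound j : exists K b, 0 <= K /\ forall t n, 0 < Cmod t < 1 ->
  Cmod (H_part t j n 1) <= K * (/ (1 - Cmod t)) ^ b * poly_geom_sum (S (S j)) (Cmod t) n.
Proof.
  destruct (H_part_term_bound j) as [K [b [HK H]]]. exists K, b. split; [exact HK|].
  intros t n Ht. unfold H_part, poly_geom_sum.
  eapply Rle_trans; [apply Cmod_sumC|]. rewrite <- sumR_scal. apply sumR_le. intros i _.
  apply H; [lra|]. intros k _. rewrite w_fac_at_1, Cmod_pow. lra.
Qed.

Lemma exp_neg_inv_bounds N : 1 <= N ->
  0 < exp (- (1 / N)) < 1 /\ / (1 - exp (- (1 / N))) <= 2 * N.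
Proof.
  intros HN. set (u := 1 / N).
  assert (Hu : 0 < u <= 1).
  { unfold u. split; [apply Rdiv_lt_0_compat; lra|].
    unfold Rdiv. rewrite Rmult_1_l, <- Rinv_1. apply Rinv_le_contravar; lra. }
  assert (E1 : exp (- u) * exp u = 1) by (rewrite <- exp_plus, Rplus_opp_l; apply exp_0).
  pose proof (exp_ineq1_le u). pose proof (exp_pos (- u)).
  assert (L : exp (- u) <= 1 - u / 2).
  { apply (Rmult_le_reg_r (1 + u)); [lra|]. nra. }
  split; [lra|].
  replace (2 * N) with (/ (u / 2)) by (unfold u; field; lra).
  apply Rinv_le_contravar; lra.
Qed.

Lemma H_part_poly_growth j : exists c p, 0 <= c /\ forall t n N, 1 <= N ->
  Cmod t = exp (- (1 / N)) -> Cmod (H_part t j n 1) <= c * N ^ p.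
Proof.
  destruct (H_part_at_1_bound j) as [K [b [HK H]]].
  exists (K * INR (fact (S (S j))) * 2 ^ b * 2 ^ S (S (S j))), (b + S (S (S j)))%nat.
  split; [apply Rmult_le_pos; [apply Rmult_le_pos; [apply Rmult_le_pos; [exact HK|apply pos_INR]|]|];
          apply pow_le; lra|].
  intros t n N HN Ht. destruct (exp_neg_inv_bounds N HN) as [Hr Hq]. rewrite <- Ht in Hr, Hq.
  set (r := Cmod t) in *.
  assert (Hq0 : 0 <= / (1 - r)) by (apply Rlt_le, Rinv_0_lt_compat; lra).
  assert (P1 : (/ (1 - r)) ^ b <= (2 * N) ^ b) by (apply pow_incr; lra).
  assert (P2 : poly_geom_sum (S (S j)) r n <= INR (fact (S (S j))) * (2 * N) ^ S (S (S j))).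
  { eapply Rle_trans; [apply poly_geom_sum_le; lra|].
    unfold Rdiv. rewrite <- pow_inv. apply Rmult_le_compat_l; [apply pos_INR|].
    apply pow_incr; lra. }
  eapply Rle_trans; [apply H, Hr|].
  eapply Rle_trans.
  - apply Rmult_le_compat; [apply Rmult_le_pos; [exact HK|apply pow_le, Hq0]
                           |apply poly_geom_sum_nonneg, Cmod_ge_0
                           |apply Rmult_le_compat_l; [exact HK|exact P1]|exact P2].
  - rewrite !Rpow_mult_distr, pow_add. right. ring.
Qed.

Lemma Q_poly_growth k : exists c p, 0 <= c /\ forall t n N, 1 <= N ->
  Cmod t = exp (- (1 / N)) -> Cmod (eval_expr (fun j => H_part t j n 1) (Q_expr k)) <= c * N ^ p.
Proof.
  destruct (eval_expr_poly_growth
              (fun th : C * nat * R => 1 <= snd th /\ Cmod (fst (fst th)) = exp (- (1 / snd th)))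
              (fun th j => H_part (fst (fst th)) j (snd (fst th)) 1) snd)
    with (e := Q_expr k) as [c [p [Hc H]]].
  - now intros th [HN _].
  - intros j. destruct (H_part_poly_growth j) as [c [p [Hc H]]]. exists c, p. split; [exact Hc|].
    intros [[t n] N] [HN Ht]. now apply H.
  - exists c, p. split; [exact Hc|]. intros t n N HN Ht. exact (H (t, n, N) (conj HN Ht)).
Qed.

Lemma Cmod_cexp_xy a y : Cmod (cexp_xy a y) = exp a.
Proof.
  unfold Cmod, cexp_xy; simpl.
  replace ((exp a * cos y) * ((exp a * cos y) * 1) + (exp a * sin y) * ((exp a * sin y) * 1))
    with (exp a ^ 2 * (sin y ^ 2 + cos y ^ 2)) by ring.
  rewrite <- !Rsqr_pow2, sin2_cos2, Rmult_1_r, Rsqr_pow2.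
  apply sqrt_pow2, Rlt_le, exp_pos.
Qed.

Theorem lemma4 (k : nat) (hk : (0 < k)%nat) (hev : Nat.Even k) :
  exists N0 Ck Ak : R, 0 < N0 /\ 0 < Ck /\ 0 < Ak /\
    forall N y : R, N0 < N -> - PI < y <= PI -> 1 / N <= Rabs y ->
      Cmod (Fk k (cexp_xy (- (1 / N)) y)) < Ck * Rpower N Ak.
Proof.
  destruct (Q_poly_growth k) as [c [p [Hc HQ]]].
  exists 1, (c + 1), (INR (S p)). split; [lra|]. split; [lra|]. split; [apply lt_0_INR; lia|].
  intros N y HN _ _.
  pose proof (Cmod_cexp_xy (- (1 / N)) y) as Ht.
  assert (HcN : 0 <= c * N ^ p) by (apply Rmult_le_pos; [exact Hc|apply pow_le; lra]).
  eapply Rle_lt_trans.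
  - apply Fk_le; [rewrite Ht; apply exp_neg_inv_bounds; lra|exact HcN|].
    intros n. apply HQ; [lra|exact Ht].
  - rewrite Rpower_pow by lra.
    assert (N ^ p <= N ^ S p) by (apply Rle_pow; lra || lia).
    assert (0 < N ^ S p) by (apply pow_lt; lra).
    nra.
Qed.
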